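(* Let $g(x)=\sum_{n\ge 1}\frac{2\,(4n+1)!}{(n+1)!\,(3n+2)!}\,x^n$, regarded as a formal power series. Then $$\lim_{n\to\infty}\frac{[x^n]\,(g(x))^2}{[x^n]\,g(x)}=\frac{10}{27}.$$
   Context: For a formal power series $f(x)$, $[x^n]f(x)$ denotes the coefficient of $x^n$ in $f(x)$. *)

From Stdlib Require Import Reals Arith.
Open Scope R_scope.

Definition fps := nat -> R.

Definition fps_mul (a b : fps) : fps :=
  fun n => sum_f_R0 (fun k => a k * b (n - k)%nat) n.

Definition g : fps :=
  fun n => match n with
           | O => 0
           | _ => 2 * INR (fact (4 * n + 1))
                  / (INR (fact (n + 1)) * INR (fact (3 * n + 2)))
           end.

(* Let B be the generalized binomial series B = 1 + x B^4; the coefficients of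
   B^r are r/(4n+r) C(4n+r, n), and g = 2B^2 - B^3 - 1.  Hence g^2 is an
   explicit combination of B^0, ..., B^6, and the ratio [x^n] g^2 / [x^n] g is a
   rational function of n of degree 0, whose leading coefficients give 10/27.
   The series B is never built: the coefficient formula is taken as the
   definition, and the multiplicativity B^a B^b = B^(a+b) is proved from the
   recurrence B^(r+1) = B^r + x B^(r+4) by induction. *)
From Stdlib Require Import Reals Arith Lra Lia FunctionalExtensionality.
From Coquelicot Require Import Coquelicot.
Open Scope R_scope.

Definition fps_sub (a b : fps) : fps := fun n => a n - b n.

Definition fps_scal (c : R) (a : fps) : fps := fun n => c * a n.

Lemma fps_mul_subl (a b c : fps) (n : nat) :
  fps_mul (fps_sub a b) c n = fps_mul a c n - fps_mul b c n.
Proof.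
  unfold fps_mul, fps_sub. rewrite <- minus_sum.
  apply sum_eq. intros k _. ring.
Qed.

Lemma fps_mul_subr (a b c : fps) (n : nat) :
  fps_mul c (fps_sub a b) n = fps_mul c a n - fps_mul c b n.
Proof.
  unfold fps_mul, fps_sub. rewrite <- minus_sum.
  apply sum_eq. intros k _. ring.
Qed.

Lemma fps_mul_scall (x : R) (a b : fps) (n : nat) :
  fps_mul (fps_scal x a) b n = x * fps_mul a b n.
Proof.
  unfold fps_mul, fps_scal. rewrite scal_sum.
  apply sum_eq. intros k _. ring.
Qed.

Lemma fps_mul_scalr (x : R) (a b : fps) (n : nat) :
  fps_mul a (fps_scal x b) n = x * fps_mul a b n.
Proof.
  unfold fps_mul, fps_scal. rewrite scal_sum.
  apply sum_eq. intros k _. ring.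
Qed.

Lemma INR_fact_S (k : nat) : INR (fact (S k)) = (INR k + 1) * INR (fact k).
Proof. rewrite fact_simpl, mult_INR, S_INR. reflexivity. Qed.

(* [raney t r] is the series B^r for B = 1 + x B^s, s = t + 1; its coefficients
   are the Raney numbers r/(sn+r) C(sn+r, n), written with factorials (n = m+1). *)
Definition raney (t r : nat) : fps :=
  fun n => match n with
  | O => 1
  | S m => INR r * INR (fact (t * m + m + t + r))
           / (INR (fact (S m)) * INR (fact (t * m + t + r)))
  end.

Lemma raney_0_S (t m : nat) : raney t 0 (S m) = 0.
Proof. unfold raney. simpl INR. unfold Rdiv. ring. Qed.

Lemma raney_S_gt0 (t r m : nat) : (0 < r)%nat -> 0 < raney t r (S m).
Proof.
  intros Hr. unfold raney.
  pose proof (INR_fact_lt_0 (t * m + m + t + r)).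
  pose proof (INR_fact_lt_0 (S m)). pose proof (INR_fact_lt_0 (t * m + t + r)).
  apply lt_0_INR in Hr.
  apply Rdiv_lt_0_compat; apply Rmult_lt_0_compat; assumption.
Qed.

Lemma raney_Sr_rec (t r m : nat) :
  raney t (S r) (S m) = raney t r (S m) + raney t (r + S t) m.
Proof.
  destruct m as [|p]; unfold raney.
  - replace (t * 0 + 0 + t + S r)%nat with (S (t + r)) by lia.
    replace (t * 0 + t + S r)%nat with (S (t + r)) by lia.
    replace (t * 0 + 0 + t + r)%nat with (t + r)%nat by lia.
    replace (t * 0 + t + r)%nat with (t + r)%nat by lia.
    pose proof (INR_fact_neq_0 (S (t + r))). pose proof (INR_fact_neq_0 (t + r)).
    rewrite S_INR. simpl (INR (fact 1)). field. split; assumption.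
  - set (N := (t * S p + S p + t + r)%nat). set (D := (t * S p + t + r)%nat).
    replace (t * S p + S p + t + S r)%nat with (S N) by (unfold N; lia).
    replace (t * S p + t + S r)%nat with (S D) by (unfold D; lia).
    replace (t * p + p + t + (r + S t))%nat with N by (unfold N; lia).
    replace (t * p + t + (r + S t))%nat with (S D) by (unfold D; lia).
    assert (HN : INR N = INR D + INR p + 1)
      by (unfold N, D; rewrite <- plus_INR, <- S_INR; f_equal; lia).
    assert (HD : INR D = INR t * INR p + 2 * INR t + INR r)
      by (unfold D; rewrite !plus_INR, mult_INR, S_INR; ring).
    rewrite !INR_fact_S, HN, HD, plus_INR, !S_INR.
    pose proof (INR_fact_neq_0 N). pose proof (INR_fact_neq_0 D).
    pose proof (INR_fact_neq_0 p).
    pose proof (pos_INR p). pose proof (pos_INR t). pose proof (pos_INR r).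
    field. repeat split; try assumption; nra.
Qed.

Lemma raney_Sr_ratio (t r m : nat) : r <> 0%nat ->
  raney t (S r) (S m) =
  (INR r + 1) * ((INR t + 1) * INR m + INR t + INR r + 1)
  / (INR r * (INR t * INR m + INR t + INR r + 1)) * raney t r (S m).
Proof.
  intros Hr. unfold raney.
  replace (t * m + m + t + S r)%nat with (S (t * m + m + t + r)) by lia.
  replace (t * m + t + S r)%nat with (S (t * m + t + r)) by lia.
  rewrite !INR_fact_S.
  pose proof (INR_fact_neq_0 (t * m + m + t + r)).
  pose proof (INR_fact_neq_0 (t * m + t + r)). pose proof (INR_fact_neq_0 m).
  apply not_0_INR in Hr.
  pose proof (pos_INR m). pose proof (pos_INR t). pose proof (pos_INR r).
  rewrite S_INR, !plus_INR, !mult_INR.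
  field. repeat split; try assumption; nra.
Qed.

Lemma fps_mul_raney (t a b n : nat) :
  fps_mul (raney t a) (raney t b) n = raney t (a + b) n.
Proof.
  unfold fps_mul. revert a b.
  induction n as [|n IHn]; intros a b; [simpl; ring|].
  rewrite decomp_sum by lia. simpl Init.Nat.pred.
  induction a as [|a IHa].
  - rewrite sum_eq_R0; [simpl; ring|].
    intros i _. rewrite raney_0_S. ring.
  - rewrite (sum_eq _ (fun i => raney t a (S i) * raney t b (S n - S i)%nat
                              + raney t (a + S t) i * raney t b (n - i)%nat))
      by (intros i _; rewrite raney_Sr_rec, !Nat.sub_succ; ring).
    rewrite sum_plus, IHn, <- Rplus_assoc.
    change (raney t (S a) 0%nat) with (raney t a 0%nat).
    rewrite IHa, Nat.add_succ_l, raney_Sr_rec.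
    replace (a + S t + b)%nat with (a + b + S t)%nat by lia.
    reflexivity.
Qed.

Lemma g_S_raney (m : nat) : g (S m) = raney 3 2 (S m) / (INR m + 2).
Proof.
  unfold g, raney.
  replace (4 * S m + 1)%nat with (3 * m + m + 3 + 2)%nat by lia.
  replace (3 * S m + 2)%nat with (3 * m + 3 + 2)%nat by lia.
  replace (S m + 1)%nat with (S (S m)) by lia.
  rewrite (INR_fact_S (S m)), S_INR.
  pose proof (INR_fact_neq_0 (3 * m + m + 3 + 2)).
  pose proof (INR_fact_neq_0 (3 * m + 3 + 2)). pose proof (INR_fact_neq_0 (S m)).
  pose proof (pos_INR m).
  simpl (INR 2). field. repeat split; try assumption; lra.
Qed.

Lemma g_raney :
  g = fps_sub (fps_sub (fps_scal 2 (raney 3 2)) (raney 3 3)) (raney 3 0).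
Proof.
  extensionality n. unfold fps_sub, fps_scal.
  destruct n as [|m]; [unfold g, raney; ring|].
  rewrite g_S_raney, raney_0_S, (raney_Sr_ratio 3 2 m) by discriminate.
  pose proof (pos_INR m). simpl INR. field. lra.
Qed.

Lemma fps_mul_g_g_raney (n : nat) :
  fps_mul g g n = 4 * raney 3 4 n - 4 * raney 3 5 n + raney 3 6 n
                  - 4 * raney 3 2 n + 2 * raney 3 3 n + raney 3 0 n.
Proof.
  rewrite g_raney, !fps_mul_subl, !fps_mul_subr, !fps_mul_scall, !fps_mul_scalr,
    !fps_mul_raney.
  simpl (_ + _)%nat. ring.
Qed.

Lemma fps_mul_g_g_div_g (n : nat) : (1 <= n)%nat ->
  fps_mul g g n / g n =
  10 * (INR n - 1) * (INR n ^ 2 + 14 * INR n + 12)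
  / ((3 * INR n + 4) * (3 * INR n + 5) * (3 * INR n + 6)).
Proof.
  intros Hn. destruct n as [|m]; [lia|].
  rewrite fps_mul_g_g_raney, g_S_raney, raney_0_S, (raney_Sr_ratio 3 5 m),
    (raney_Sr_ratio 3 4 m), (raney_Sr_ratio 3 3 m), (raney_Sr_ratio 3 2 m)
    by discriminate.
  pose proof (raney_S_gt0 3 2 m ltac:(lia)).
  pose proof (pos_INR m).
  rewrite (S_INR m). simpl INR. field. repeat split; lra.
Qed.

Lemma is_lim_seq_comp_inv_INR (f : R -> R) :
  continuity_pt f 0 -> is_lim_seq (fun n => f (/ INR n)) (f 0).
Proof.
  intros Hf. apply is_lim_seq_continuous; [exact Hf|].
  replace (Finite 0) with (Rbar_inv p_infty) by reflexivity.
  apply is_lim_seq_inv; [apply is_lim_seq_INR | discriminate].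
Qed.

Theorem mainTheorem1 :
  Un_cv (fun n => fps_mul g g n / g n) (10 / 27).
Proof.
  set (h := fun x => 10 * (1 - x) * (1 + 14 * x + 12 * x ^ 2)
                     / ((3 + 4 * x) * (3 + 5 * x) * (3 + 6 * x))).
  apply is_lim_seq_Reals.
  replace (10 / 27) with (h 0) by (unfold h; field).
  apply (is_lim_seq_ext_loc (fun n => h (/ INR n))).
  - exists 1%nat. intros n Hn.
    rewrite fps_mul_g_g_div_g by exact Hn. unfold h.
    assert (1 <= INR n) by (apply (le_INR 1); exact Hn).
    field. repeat split; lra.
  - apply is_lim_seq_comp_inv_INR. unfold h. reg. lra.
Qed.
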